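(* Let $g\in\mathbb{R}^d$ with $\|g\|=1$, and let $R,C,B,\eta>0$ with $R<1$ and $C>B$. For $w,r\in\mathbb{R}^d$ let $F(w,r)=\eta\|g+r\|^2-2\langle w,g+r\rangle$, and let $$F^*=\max\{F(w,r):\ \langle g,w\rangle\ge B,\ \|r\|^2\le R^2,\ \|w\|^2\le C^2\}.$$ Then $$F^*\le\max\left\{\eta(1+R^2)+2R\sqrt{\eta^2+C^2-2\eta B}-2B,\ \eta(R^2-1)\right\}.$$
   Context: $\|\cdot\|$ denotes the Euclidean norm and $\langle\cdot,\cdot\rangle$ the Euclidean inner product on $\mathbb{R}^d$. *)

From HB Require Import structures.
From mathcomp Require Import all_boot all_order all_algebra.
Set Implicit Arguments. Unset Strict Implicit. Unset Printing Implicit Defensive.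
Import Order.TTheory GRing.Theory Num.Theory.
Local Open Scope ring_scope.

Definition dotv (R : rcfType) (d : nat) (u v : 'rV[R]_d) : R :=
  \sum_(i < d) u 0 i * v 0 i.

Definition enorm (R : rcfType) (d : nat) (u : 'rV[R]_d) : R :=
  Num.sqrt (dotv u u).

Definition Fobj (R : rcfType) (d : nat) (eta : R) (g w r : 'rV[R]_d) : R :=
  eta * enorm (g + r) ^+ 2 - 2 * dotv w (g + r).

From HB Require Import structures.
From mathcomp Require Import all_boot all_order all_algebra.
From mathcomp Require Import ring lra.
Set Implicit Arguments.
Unset Strict Implicit.
Unset Printing Implicit Defensive.
Import Order.TTheory GRing.Theory Num.Theory.
Local Open Scope ring_scope.

(* Expanding the square, F(w, r) = eta (1 + |r|^2) - 2 <g, w> + 2 <eta g - w, r>.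
   By Cauchy-Schwarz the last term is at most 2 |r| |eta g - w|, and on the
   feasible set |eta g - w|^2 = eta^2 - 2 eta <g, w> + |w|^2 is at most
   eta^2 + C^2 - 2 eta B. Hence the first alternative of the maximum alone
   already bounds F. *)

Section EuclideanSpace.
Variables (R : rcfType) (d : nat).
Implicit Types u v x : 'rV[R]_d.

Lemma dotvC u v : dotv u v = dotv v u.
Proof. by apply: eq_bigr => i _; rewrite mulrC. Qed.

Lemma dotvDl u v x : dotv (u + v) x = dotv u x + dotv v x.
Proof. by rewrite /dotv -big_split; apply: eq_bigr => i _; rewrite mxE mulrDl. Qed.

Lemma dotvBl u v x : dotv (u - v) x = dotv u x - dotv v x.
Proof. by rewrite /dotv -sumrB; apply: eq_bigr => i _; rewrite !mxE mulrBl. Qed.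

Lemma dotvZl (a : R) u x : dotv (a *: u) x = a * dotv u x.
Proof. by rewrite /dotv mulr_sumr; apply: eq_bigr => i _; rewrite mxE mulrA. Qed.

Lemma dotvDr u v x : dotv x (u + v) = dotv x u + dotv x v.
Proof. by rewrite dotvC dotvDl !(dotvC x). Qed.

Lemma dotvBr u v x : dotv x (u - v) = dotv x u - dotv x v.
Proof. by rewrite dotvC dotvBl !(dotvC x). Qed.

Lemma dotvZr (a : R) u x : dotv x (a *: u) = a * dotv x u.
Proof. by rewrite dotvC dotvZl dotvC. Qed.

Lemma dotvv_ge0 u : 0 <= dotv u u.
Proof. by apply: sumr_ge0 => i _; rewrite -expr2 sqr_ge0. Qed.

Lemma enorm_ge0 u : 0 <= enorm u.
Proof. exact: sqrtr_ge0. Qed.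

Lemma enorm_sqr u : enorm u ^+ 2 = dotv u u.
Proof. by rewrite /enorm sqr_sqrtr // dotvv_ge0. Qed.

Lemma lagrange_identity u v :
  \sum_(i < d) \sum_(j < d) (u 0 i * v 0 j - u 0 j * v 0 i) ^+ 2 =
  2 * (dotv u u * dotv v v - dotv u v ^+ 2).
Proof.
have sqrE i j : (u 0 i * v 0 j - u 0 j * v 0 i) ^+ 2 =
    (u 0 i * u 0 i) * (v 0 j * v 0 j) + (u 0 j * u 0 j) * (v 0 i * v 0 i)
    - 2 * ((u 0 i * v 0 i) * (u 0 j * v 0 j)) by ring.
have innerE i : \sum_(j < d) (u 0 i * v 0 j - u 0 j * v 0 i) ^+ 2 =
    (u 0 i * u 0 i) * dotv v v + dotv u u * (v 0 i * v 0 i)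
    - 2 * ((u 0 i * v 0 i) * dotv u v).
  under eq_bigr => j _ do rewrite sqrE.
  rewrite sumrB big_split /= /dotv !mulr_sumr mulr_suml.
  by congr (_ + _ - _); apply: eq_bigr => j _; rewrite mulrA.
under eq_bigr => i _ do rewrite innerE.
rewrite sumrB big_split /= -mulr_suml -!mulr_sumr -mulr_suml -/(dotv u u)
  -/(dotv v v) -/(dotv u v).
ring.
Qed.

Lemma cauchy_schwarz_sqr u v : dotv u v ^+ 2 <= dotv u u * dotv v v.
Proof.
have : 0 <= 2 * (dotv u u * dotv v v - dotv u v ^+ 2).
  rewrite -lagrange_identity.
  by apply: sumr_ge0 => i _; apply: sumr_ge0 => j _; apply: sqr_ge0.
lra.
Qed.

Lemma cauchy_schwarz u v : dotv u v <= enorm u * enorm v.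
Proof.
apply: le_trans (ler_norm _) _.
rewrite -sqrtr_sqr /enorm -sqrtrM ?dotvv_ge0 // ler_sqrt ?cauchy_schwarz_sqr //.
by rewrite mulr_ge0 ?dotvv_ge0.
Qed.

End EuclideanSpace.

Section Objective.
Variables (R : rcfType) (d : nat) (eta : R).
Implicit Types g w r : 'rV[R]_d.

Lemma FobjE g w r :
  Fobj eta g w r =
  eta * (dotv g g + dotv r r) - 2 * dotv g w + 2 * dotv (eta *: g - w) r.
Proof.
rewrite /Fobj enorm_sqr !(dotvBl, dotvDl, dotvDr, dotvZl) (dotvC r g) (dotvC w g).
ring.
Qed.

Lemma Fobj_le g w r : dotv g g = 1 ->
  Fobj eta g w r <=
  eta * (1 + enorm r ^+ 2) - 2 * dotv g w + 2 * (enorm (eta *: g - w) * enorm r).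
Proof.
move=> gg; rewrite FobjE gg enorm_sqr.
by rewrite lerD2l ler_pM2l ?cauchy_schwarz.
Qed.

Lemma enorm_scale_subr_sqr g w :
  enorm (eta *: g - w) ^+ 2 =
  eta ^+ 2 * dotv g g - 2 * eta * dotv g w + enorm w ^+ 2.
Proof.
rewrite !enorm_sqr !(dotvBl, dotvBr, dotvZl, dotvZr) (dotvC w g); ring.
Qed.

End Objective.

Theorem lemma7p1 (R : rcfType) (d : nat) (g : 'rV[R]_d) (Rr C B eta : R) :
  enorm g = 1 -> 0 < Rr -> 0 < C -> 0 < B -> 0 < eta -> Rr < 1 -> B < C ->
  forall w r : 'rV[R]_d,
    B <= dotv g w -> enorm r ^+ 2 <= Rr ^+ 2 -> enorm w ^+ 2 <= C ^+ 2 ->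
    Fobj eta g w r <=
      Num.max (eta * (1 + Rr ^+ 2) + 2 * Rr * Num.sqrt (eta ^+ 2 + C ^+ 2 - 2 * eta * B) - 2 * B)
              (eta * (Rr ^+ 2 - 1)).
Proof.
move=> g1 Rr_gt0 _ B_gt0 eta_gt0 _ BC w r Bgw rRr wC.
have gg : dotv g g = 1 by rewrite -enorm_sqr g1 expr1n.
set S := Num.sqrt _.
have r_le : enorm r <= Rr.
  by rewrite -ler_sqr ?nnegrE ?enorm_ge0 ?(ltW Rr_gt0).
have v_le : enorm (eta *: g - w) <= S.
  rewrite /S /enorm ler_sqrt; last by have := sqr_ge0 (eta - B); nra.
  rewrite -enorm_sqr enorm_scale_subr_sqr gg; nra.
have vr_le : enorm (eta *: g - w) * enorm r <= S * Rr.
  by rewrite ler_pM ?enorm_ge0.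
rewrite le_max; apply/orP; left.
apply: le_trans (Fobj_le eta w r gg) _.
nra.
Qed.
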